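(* Let $N$ states $i=1,\dots,N$ be observed at times $t=0,1$, with treatment version $M_i\in\{0,1,\dots,k\}$ applied at $t=1$, $A_i=\mathbb{I}(M_i>0)$, discrete covariate $X_i$, potential outcomes $Y_{it}(m)$, and (for untreated states) a potential version $M_i(1)\in\{1,\dots,k\}$. Assume consistency ($Y_{i1}=Y_{i1}(M_i)$, $Y_{i0}=Y_{i0}(0)$), the exclusion restriction (the potential outcome of an untreated state under $A=1$ is $Y_{i1}(M_i(1))$), and unit-level conditional parallel trends: for all $i$ and all $m=0,\dots,k$, $$Y_{i1}(m)=Y_{i0}+\Big[\sum_{j=1}^N\mathbb{I}(X_j=X_i,M_j=m)\Big]^{-1}\Big[\sum_{j=1}^N\mathbb{I}(X_j=X_i,M_j=m)(Y_{j1}-Y_{j0})\Big],$$ where all denominators are assumed positive. Define, for a state $i$ with $X_i=x$: if $A_i=1$, $\hat\psi_i^{DiD}=Y_{i1}-\hat Y_{i1}(0)$ with $\hat Y_{i1}(0)=Y_{i0}+[\sum_j(1-A_j)\mathbb{I}(X_j=x)]^{-1}\sum_j(1-A_j)\mathbb{I}(X_j=x)(Y_{j1}-Y_{j0})$; if $A_i=0$, $\hat\psi_i^{DiD}=\hat Y_{i1}(M_i(1))-Y_{i1}$ with $\hat Y_{i1}(M_i(1))=Y_{i0}+[\sum_jA_j\mathbb{I}(X_j=x)]^{-1}\sum_jA_j\mathbb{I}(X_j=x)(Y_{j1}-Y_{j0})$. Then for a treated state $i$, $\hat\psi_i^{DiD}=Y_{i1}(M_i)-Y_{i1}(0)$,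 and for an untreated state $i$ with $X_i=x$, $$\hat\psi_i^{DiD}=\sum_{m>0}\big(Y_{i1}(m)-Y_{i1}(0)\big)\Pr_N(M=m\mid A=1,X=x),$$ where $\Pr_N(M=m\mid A=1,X=x)=\sum_j\mathbb{I}(M_j=m,X_j=x)/\sum_jA_j\mathbb{I}(X_j=x)$.
   Context: $\Pr_N$ denotes empirical proportions over the $N$ states. *)

From HB Require Import structures.
From mathcomp Require Import all_boot all_order all_algebra.
Set Implicit Arguments. Unset Strict Implicit. Unset Printing Implicit Defensive.
Import Order.TTheory GRing.Theory Num.Theory.
Local Open Scope ring_scope.

Definition trt (N : nat) (M : 'I_N -> nat) (j : 'I_N) : bool := (0 < M j)%N.

Definition PrN (R : realFieldType) (T : eqType) (N : nat)
  (X : 'I_N -> T) (M : 'I_N -> nat) (m : nat) (x : T) : R :=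
  (\sum_(j < N) ((M j == m) && (X j == x))%:R)
  / (\sum_(j < N) (trt M j && (X j == x))%:R).

Definition psi_did (R : realFieldType) (T : eqType) (N : nat)
  (X : 'I_N -> T) (M : 'I_N -> nat) (Y0 Y1 : 'I_N -> R) (i : 'I_N) : R :=
  if trt M i then
    Y1 i - (Y0 i
      + (\sum_(j < N) (~~ trt M j && (X j == X i))%:R * (Y1 j - Y0 j))
        / (\sum_(j < N) (~~ trt M j && (X j == X i))%:R))
  else
    (Y0 i
      + (\sum_(j < N) (trt M j && (X j == X i))%:R * (Y1 j - Y0 j))
        / (\sum_(j < N) (trt M j && (X j == X i))%:R)) - Y1 i.

From mathcomp Require Import all_boot all_order all_algebra.
From mathcomp Require Import ring.
Set Implicit Arguments. Unset Strict Implicit. Unset Printing Implicit Defensive.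
Import Order.TTheory GRing.Theory Num.Theory.
Local Open Scope ring_scope.

(* Parallel trends says that Y_{i1}(m) is Y_{i0} plus the mean gain of the cell
   {X = X_i, M = m}; for a treated state this is the claim at m = 0.  The weights
   Pr_N(M = m | A = 1, X = x) are proportional to the cell sizes, so averaging
   the cell means with them pools the treated cells of stratum x into Y_{i0}
   plus the mean gain of all treated states with X = x, which is exactly the
   estimator's imputation for an untreated state. *)

Lemma sum_nat_indicator (R : pzSemiRingType) (a b n : nat) (F : nat -> R) :
  \sum_(a <= m < b) (n == m)%:R * F m = (a <= n < b)%:R * F n.
Proof.
under eq_bigr do rewrite mulr_natl mulrb eq_sym.
by rewrite -big_mkcond big_nat1_eq mulr_natl mulrb.
Qed.

Lemma sum_weighted_cell_means (R : fieldType) (I : eqType) (r : seq I)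
    (w s : I -> R) (a b : R) :
  {in r, forall m, w m != 0} -> \sum_(m <- r) w m != 0 ->
  \sum_(m <- r) (a + s m / w m - b) * (w m / \sum_(m <- r) w m)
  = a + (\sum_(m <- r) s m) / \sum_(m <- r) w m - b.
Proof.
move=> w_neq0 W_neq0; under eq_bigr do rewrite mulrA.
rewrite -mulr_suml (eq_big_seq (fun m => (a - b) * w m + s m)); last first.
  by move=> m /w_neq0 wm_neq0; field.
by rewrite big_split /= -mulr_sumr; field.
Qed.

Definition cell_size (R : pzSemiRingType) (T : eqType) (N : nat)
    (X : 'I_N -> T) (M : 'I_N -> nat) (x : T) (m : nat) : R :=
  \sum_(j < N) ((M j == m) && (X j == x))%:R.

Definition cell_gain (R : pzRingType) (T : eqType) (N : nat)
    (X : 'I_N -> T) (M : 'I_N -> nat) (Y0 Y1 : 'I_N -> R) (x : T) (m : nat) : R :=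
  \sum_(j < N) ((M j == m) && (X j == x))%:R * (Y1 j - Y0 j).

Section Cells.

Context {R : realFieldType} {T : eqType} {N k : nat}.
Context {X : 'I_N -> T} {M : 'I_N -> nat} {Y0 Y1 : 'I_N -> R}.

Local Notation cell_size := (cell_size R X M).
Local Notation cell_gain := (cell_gain X M Y0 Y1).

Lemma untreated_cellE j x : ~~ trt M j && (X j == x) = (M j == 0%N) && (X j == x).
Proof. by rewrite /trt lt0n negbK. Qed.

Lemma psi_did_treated i : trt M i ->
  psi_did X M Y0 Y1 i = Y1 i - (Y0 i + cell_gain (X i) 0 / cell_size (X i) 0).
Proof.
move=> treated_i; rewrite /psi_did treated_i /cell_gain /cell_size.
under eq_bigr do rewrite untreated_cellE.
by under [in X in _ / X]eq_bigr do rewrite untreated_cellE.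
Qed.

Hypothesis M_le_k : forall j, (M j <= k)%N.

Lemma sum_cells_treated x (c : 'I_N -> R) :
  \sum_(1 <= m < k.+1) \sum_(j < N) ((M j == m) && (X j == x))%:R * c j
  = \sum_(j < N) (trt M j && (X j == x))%:R * c j.
Proof.
rewrite exchange_big; apply: eq_bigr => j _ /=.
under eq_bigr do rewrite -mulnb natrM -mulrA.
by rewrite sum_nat_indicator ltnS M_le_k andbT -mulnb natrM mulrA.
Qed.

Lemma treated_size x :
  \sum_(j < N) (trt M j && (X j == x))%:R = \sum_(1 <= m < k.+1) cell_size x m.
Proof.
transitivity (\sum_(j < N) (trt M j && (X j == x))%:R * 1 : R).
  by apply: eq_bigr => j _; rewrite mulr1.
rewrite -sum_cells_treated; apply: eq_bigr => m _.
by under eq_bigr do rewrite mulr1.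
Qed.

Lemma treated_gain x :
  \sum_(j < N) (trt M j && (X j == x))%:R * (Y1 j - Y0 j)
  = \sum_(1 <= m < k.+1) cell_gain x m.
Proof. by rewrite sum_cells_treated. Qed.

Lemma PrN_cell m x :
  PrN R X M m x = cell_size x m / \sum_(1 <= m' < k.+1) cell_size x m'.
Proof. by rewrite /PrN treated_size. Qed.

Lemma psi_did_untreated i : ~~ trt M i ->
  psi_did X M Y0 Y1 i
  = Y0 i + (\sum_(1 <= m < k.+1) cell_gain (X i) m)
           / (\sum_(1 <= m < k.+1) cell_size (X i) m) - Y1 i.
Proof.
by move=> /negbTE untreated_i; rewrite /psi_did untreated_i treated_size treated_gain.
Qed.

End Cells.

Theorem proposition4 (R : realFieldType) (T : eqType) (N k : nat)
  (X : 'I_N -> T)                 (* discrete covariate *)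
  (M : 'I_N -> nat)               (* treatment version in {0,..,k} *)
  (Y0 Y1 : 'I_N -> R)             (* observed outcomes at t = 0, 1 *)
  (Y1pot : 'I_N -> nat -> R)      (* potential outcomes Y_{i1}(m) *)
  (Y0pot : 'I_N -> nat -> R)      (* potential outcomes Y_{i0}(m) *)
  (M1 : 'I_N -> nat)              (* potential version M_i(1) *)
  (Y1A : 'I_N -> R)               (* potential outcome Y_{i1}(A = 1) of untreated states *)
  (hM : forall i, (M i <= k)%N)
  (hM1 : forall i, ~~ trt M i -> (1 <= M1 i <= k)%N)
  (hcons1 : forall i, Y1 i = Y1pot i (M i))
  (hcons0 : forall i, Y0 i = Y0pot i 0%N)
  (hexcl : forall i, ~~ trt M i -> Y1A i = Y1pot i (M1 i))
  (hpos : forall i (m : nat), (m <= k)%N ->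
     0 < \sum_(j < N) ((X j == X i) && (M j == m))%:R :> R)
  (hposA : forall i, 0 < \sum_(j < N) (trt M j && (X j == X i))%:R :> R)
  (hpos0 : forall i, 0 < \sum_(j < N) (~~ trt M j && (X j == X i))%:R :> R)
  (hpt : forall i (m : nat), (m <= k)%N ->
     Y1pot i m = Y0 i
       + (\sum_(j < N) ((X j == X i) && (M j == m))%:R)^-1
         * (\sum_(j < N) ((X j == X i) && (M j == m))%:R * (Y1 j - Y0 j))) :
  (forall i, trt M i -> psi_did X M Y0 Y1 i = Y1pot i (M i) - Y1pot i 0%N)
  /\
  (forall i (x : T), ~~ trt M i -> X i = x ->
     psi_did X M Y0 Y1 i
     = \sum_(1 <= m < k.+1) (Y1pot i m - Y1pot i 0%N) * PrN R X M m x).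
Proof.
(* hcons0, hexcl and hM1 only tie Y1pot to the paper's Y_{i0}(0) and
   Y_{i1}(M_i(1)), and hpos0 is hpos at m = 0: none of them is needed. *)
have cellE i m j : ((X j == X i) && (M j == m)) = ((M j == m) && (X j == X i)).
  exact: andbC.
have Y1potE i m : (m <= k)%N ->
    Y1pot i m = Y0 i + cell_gain X M Y0 Y1 (X i) m / cell_size R X M (X i) m.
  by move=> m_le_k; rewrite hpt // mulrC; under eq_bigr do rewrite cellE;
    under [in X in _ / X]eq_bigr do rewrite cellE.
split=> [i treated_i | i x untreated_i <-].
  by rewrite psi_did_treated // -hcons1 Y1potE.
have Y1i : Y1pot i 0%N = Y1 i.
  by move: untreated_i; rewrite hcons1 /trt lt0n negbK => /eqP ->.
rewrite (psi_did_untreated hM) //.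
under [RHS]eq_big_nat => m /andP[_ lt_m_k1] do rewrite (PrN_cell hM) Y1potE // Y1i.
have sizes_neq0 : {in index_iota 1 k.+1, forall m, cell_size R X M (X i) m != 0}.
  move=> m; rewrite mem_index_iota ltnS => /andP[_ m_le_k].
  by rewrite /cell_size gt_eqF //; under eq_bigr do rewrite -cellE; exact: hpos.
have total_neq0 : \sum_(1 <= m < k.+1) cell_size R X M (X i) m != 0.
  by rewrite -(treated_size hM) gt_eqF.
by rewrite sum_weighted_cell_means.
Qed.
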